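(* Let $\mu_1,\mu_2$ be two mass distributions in $\mathbb{R}^2$ and let $q$ be a point of $\mathbb{R}^2$. Then there exist two lines $\ell_1,\ell_2$ such that $\{\ell_1,\ell_2\}$ simultaneously bisects $\mu_1,\mu_2$, and both $\ell_1$ and $\ell_2$ go through $q$.
   Context: A mass distribution $\mu$ on $\mathbb{R}^2$ is a measure such that all open subsets are measurable, $0<\mu(\mathbb{R}^2)<\infty$, and $\mu(S)=0$ for every lower-dimensional subset $S$. For a finite set $\mathcal{L}$ of oriented lines, each $\ell\in\mathcal{L}$ has positive side $\ell^+=\{x: g(x)\ge 0\}$ for a defining affine function $g$. Let $\lambda(p)$ be the number of lines of $\mathcal{L}$ having $p$ on their positive side, $R^+=\{p:\lambda(p)\text{ even}\}$, $R^-=\{p:\lambda(p)\text{ odd}\}$. $\mathcal{L}$ simultaneously bisects $\mu_1,\dots,\mu_k$ if $\mu_i(R^+)=\mu_i(R^-)$ for all $i$; an unoriented set of lines bisects if some orientation does. *)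

From HB Require Import structures.
From mathcomp Require Import all_boot all_order all_algebra.
From mathcomp Require Import all_classical all_reals all_analysis.
Set Implicit Arguments. Unset Strict Implicit. Unset Printing Implicit Defensive.
Import Order.TTheory GRing.Theory Num.Theory.
Local Open Scope classical_set_scope.
Local Open Scope ring_scope.

Section Defs.
Variable R : realType.

(* An oriented line is given by a defining affine function
   g(x) = a x_1 + b x_2 + c with (a,b) <> (0,0); we store (a,b,c). *)
Definition aff (l : R * R * R) (x : R * R) : R :=
  l.1.1 * x.1 + l.1.2 * x.2 + l.2.

Definition nondeg (l : R * R * R) : Prop := (l.1.1, l.1.2) <> (0, 0).

Definition line_set (l : R * R * R) : set (R * R) := [set x | aff l x = 0].

Definition pos_side (l : R * R * R) : set (R * R) := [set x | 0 <= aff l x].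

(* lambda(p) for the finite set of oriented lines {l1, l2}: if l1 and l2 have
   the same underlying line, the set has a single element (oriented as l1). *)
Definition lambda2 (l1 l2 : R * R * R) (p : R * R) : nat :=
  (asbool (pos_side l1 p) +
   (if asbool (line_set l1 = line_set l2) then 0 else asbool (pos_side l2 p)))%N.

Definition Rplus2 l1 l2 : set (R * R) := [set p | ~~ odd (lambda2 l1 l2 p)].
Definition Rminus2 l1 l2 : set (R * R) := [set p | odd (lambda2 l1 l2 p)].

Definition bisects2 (mu : set (R * R) -> \bar R) l1 l2 : Prop :=
  mu (Rplus2 l1 l2) = mu (Rminus2 l1 l2).

Definition mass_distribution (mu : {measure set (R * R) -> \bar R}) : Prop :=
  [/\ (forall A : set (R^o * R^o), open A -> measurable (A : set (R * R))),
      (0 < mu setT)%E, (mu setT < +oo)%E &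
      (* lower-dimensional subsets: points and lines *)
      (forall S : set (R * R),
          ((exists l, nondeg l /\ S `<=` line_set l) \/ (exists x, S = [set x])) ->
          measurable S -> mu S = 0%E)].
End Defs.

From HB Require Import structures.
From mathcomp Require Import all_boot all_order all_algebra.
From mathcomp Require Import all_classical all_reals all_analysis.
From mathcomp Require Import ring lra measurable_realfun.
Set Implicit Arguments. Unset Strict Implicit. Unset Printing Implicit Defensive.
Import Order.TTheory GRing.Theory Num.Theory.
Import numFieldNormedType.Exports.
Local Open Scope classical_set_scope.
Local Open Scope ring_scope.

(* The lines through q are parametrised by t in [0, 1] through their
   normal (1 - 2t, t(1 - t)), which makes a half-turn, so that pencil 1 is
   pencil 0 with the opposite orientation.  For two distinct lines of this
   pencil the odd region R^- is the double wedge on which their positive sides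
   disagree, and up to the null line pencil 0 these wedges are additive: the
   wedge from 0 to b is the union of the wedges from 0 to a and from a to b.
   Hence F_i(t) = mu_i(wedge 0 t) / mu_i(R^2) is nondecreasing from F_i(0) = 0
   to F_i(1) = 1, and continuous because the wedge from x to y shrinks to a
   null line as y tends to x.  It remains to find a <= b with
   F_1(b) - F_1(a) = F_2(b) - F_2(a) = 1/2.  Reparametrising by F_1 + F_2
   turns F_1 into a 1-Lipschitz map e on [0, 2] with e(0) = 0 and e(2) = 1,
   and the intermediate value theorem applied to e(v + 1) - e(v), whose values
   at v = 0 and v = 1 add up to 1, yields the required window. *)

Section halving_interval.
Variable R : realType.

Lemma within_continuous_dist (A : set R) (f : R -> R) :
  (forall x e, A x -> 0 < e -> exists2 d, 0 < d &
     forall y, A y -> `|x - y| < d -> `|f x - f y| < e) ->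
  {within A, continuous f}.
Proof.
move=> fA; apply/subspace_continuousP => x Ax; apply/cvgrPdist_lt => e e0.
have [d d0 fd] := fA x e Ax e0.
by rewrite near_withinE; exists d => //= y xy Ay; exact: fd.
Qed.

Lemma nonexpansive_half_window (e : R -> R) :
  {in `[0, 2] &, forall v w, `|e v - e w| <= `|v - w|} -> e 0 = 0 -> e 2 = 1 ->
  exists2 c, 0 <= c <= 1 & e (c + 1) - e c = 2^-1.
Proof.
move=> e_dist e0 e2; pose g v := e (v + 1) - e v.
have g_cont : {within `[0, 1], continuous g}.
  apply: within_continuous_dist => v eps; rewrite /= in_itv /= => v01 eps0.
  exists (eps / 2) => [|w]; first by rewrite divr_gt0.
  rewrite in_itv /= => w01 vw.
  have := e_dist (v + 1) (w + 1); have := e_dist v w; rewrite !in_itv /=.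
  have -> : v + 1 - (w + 1) = v - w by ring.
  have := ler_normB (e (v + 1) - e (w + 1)) (e v - e w).
  have -> : e (v + 1) - e (w + 1) - (e v - e w) = g v - g w by rewrite /g; ring.
  lra.
have [|c] := IVT (v := 2^-1) ler01 g_cont; last by rewrite in_itv /=; exists c.
by rewrite /g add0r e0 (_ : 1 + 1 = 2) // e2 ge_min le_max; lra.
Qed.

Lemma homo_ler_sum (d1 d2 : R -> R) x y :
  {in `[0, 1] &, {homo d1 : x y / x <= y}} ->
  {in `[0, 1] &, {homo d2 : x y / x <= y}} ->
  x \in `[0, 1] -> y \in `[0, 1] -> d1 x + d2 x <= d1 y + d2 y ->
  0 <= d1 y - d1 x <= d1 y + d2 y - (d1 x + d2 x).
Proof.
move=> d1_homo d2_homo x01 y01; have [xy|/ltW yx] := leP x y => sxy.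
  by have := d1_homo _ _ x01 y01 xy; have := d2_homo _ _ x01 y01 xy; lra.
by have := d1_homo _ _ y01 x01 yx; have := d2_homo _ _ y01 x01 yx; lra.
Qed.

Lemma halving_interval (d1 d2 : R -> R) :
  {in `[0, 1] &, {homo d1 : x y / x <= y}} ->
  {in `[0, 1] &, {homo d2 : x y / x <= y}} ->
  {within `[0, 1], continuous d1} -> {within `[0, 1], continuous d2} ->
  d1 0 = 0 -> d2 0 = 0 -> d1 1 = 1 -> d2 1 = 1 ->
  exists a b, [/\ 0 <= a, a <= b, b <= 1,
    d1 b - d1 a = 2^-1 & d2 b - d2 a = 2^-1].
Proof.
move=> d1_homo d2_homo d1_cont d2_cont d10 d20 d11 d21.
have s_cont : {within `[0, 1], continuous (d1 \+ d2)}.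
  by move=> x; apply: cvgD; [exact: d1_cont | exact: d2_cont].
have s_onto v : exists t, 0 <= v <= 2 -> t \in `[0, 1] /\ d1 t + d2 t = v.
  have [v02|] := boolP (0 <= v <= 2); last by exists 0.
  have [|t t01 stv] := IVT (v := v) ler01 s_cont; last by exists t.
  by rewrite /= d10 d20 d11 d21 add0r (_ : 1 + 1 = 2) // ge_min le_max; lra.
have [inv_s inv_sP] := choice s_onto.
have d1_lip := homo_ler_sum d1_homo d2_homo.
have [|||c c01 e_half] := @nonexpansive_half_window (d1 \o inv_s).
- move=> v w; rewrite !in_itv /= => /inv_sP[v01 sv] /inv_sP[w01 sw].
  have [vw|/ltW wv] := leP v w.
    move: (d1_lip _ _ v01 w01); rewrite sv sw => /(_ vw) /andP[inc_ge0 inc_le].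
    by rewrite distrC (distrC v) !ger0_norm // subr_ge0.
  move: (d1_lip _ _ w01 v01); rewrite sv sw => /(_ wv) /andP[inc_ge0 inc_le].
  by rewrite !ger0_norm // subr_ge0.
- have [t01 st] := inv_sP 0 ltac:(lra).
  have := d1_lip 0 _ _ t01; rewrite st d10 d20 /= in_itv /= lexx ler01 addr0.
  by move=> /(_ isT (lexx 0)); lra.
- have [t01 st] := inv_sP 2 ltac:(lra).
  have := d1_lip _ 1 t01; rewrite st d11 d21 /= in_itv /= lexx ler01.
  by move=> /(_ isT (lexx 2)); lra.
have [a01 sa] := inv_sP c ltac:(lra).
have [b01 sb] := inv_sP (c + 1) ltac:(lra).
exists (inv_s c), (inv_s (c + 1)).
move: (a01) (b01); rewrite !in_itv /= => /andP[a0 a1] /andP[b0 b1].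
split => //; last by move: e_half sa sb => /=; lra.
rewrite leNgt; apply/negP => ba.
have := d1_homo _ _ b01 a01 (ltW ba); have := d2_homo _ _ b01 a01 (ltW ba).
by move: sa sb; lra.
Qed.
End halving_interval.

Section wedge.
Variable R : realType.
Implicit Types l : R * R * R.

Definition wedge l1 l2 : set (R * R) :=
  [set x | (0 <= aff l1 x) != (0 <= aff l2 x)].

Lemma wedgeC l1 l2 : wedge l1 l2 = wedge l2 l1.
Proof. by apply/seteqP; split => x; rewrite /wedge /= eq_sym. Qed.

Lemma wedgexx l : wedge l l = set0.
Proof. by apply/seteqP; split => x //; rewrite /wedge /= eqxx. Qed.

Lemma wedgeUI l1 l2 l3 :
  wedge l1 l3 `|` (wedge l1 l2 `&` wedge l2 l3) = wedge l1 l2 `|` wedge l2 l3.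
Proof.
apply/seteqP; split => x; rewrite /wedge /=;
  by case: (0 <= aff l1 x); case: (0 <= aff l2 x); case: (0 <= aff l3 x);
     rewrite /=; intuition.
Qed.

Lemma Rminus2_wedge l1 l2 :
  line_set l1 <> line_set l2 -> Rminus2 l1 l2 = wedge l1 l2.
Proof.
move=> l12; apply/seteqP; split => x;
  rewrite /Rminus2 /wedge /lambda2 /pos_side /= (asboolF l12) !asboolb oddD !oddb;
  by case: (0 <= aff l1 x); case: (0 <= aff l2 x).
Qed.

Lemma Rplus2_wedge l1 l2 :
  line_set l1 <> line_set l2 -> Rplus2 l1 l2 = ~` wedge l1 l2.
Proof.
move=> l12; apply/seteqP; split => x;
  rewrite /Rplus2 /wedge /lambda2 /pos_side /= (asboolF l12) !asboolb oddD !oddb;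
  by case: (0 <= aff l1 x); case: (0 <= aff l2 x).
Qed.

Lemma measurable_aff l : measurable_fun setT (aff l).
Proof.
by apply: measurable_funD => //; apply: measurable_funD; apply: measurable_funM.
Qed.

Lemma measurable_pos_side l : measurable (pos_side l).
Proof.
have := measurable_aff l measurableT (measurable_itv `[0, +oo[); rewrite setTI.
by congr measurable; apply/seteqP; split => x; rewrite /= in_itv /= andbT.
Qed.

Lemma measurable_wedge l1 l2 : measurable (wedge l1 l2).
Proof.
rewrite (_ : wedge l1 l2 =
    (pos_side l1 `\` pos_side l2) `|` (pos_side l2 `\` pos_side l1)).
  by apply: measurableU; apply: measurableD; exact: measurable_pos_side.
apply/seteqP; split => x; rewrite /wedge /pos_side /=;
  by case: (0 <= aff l1 x); case: (0 <= aff l2 x); intuition.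
Qed.

End wedge.

Section pencil.
Variables (R : realType) (q : R * R).

Definition pencil (t : R) : R * R * R :=
  ((1 - 2 * t, t * (1 - t)), - ((1 - 2 * t) * q.1 + t * (1 - t) * q.2)).

Local Notation G t := (aff (pencil t)).
Local Notation W a b := (wedge (pencil a) (pencil b)).

Lemma aff_pencil t x :
  G t x = (1 - 2 * t) * (x.1 - q.1) + t * (1 - t) * (x.2 - q.2).
Proof. by rewrite /aff /=; ring. Qed.

Lemma aff_pencil_center t : G t q = 0.
Proof. by rewrite aff_pencil !subrr !mulr0 addr0. Qed.

Lemma pencil_nondeg t : nondeg (pencil t).
Proof.
rewrite /nondeg /= => -[t1 t2].
have t12 : t = 2^-1 by lra.
by move: t2; rewrite t12; lra.
Qed.

Lemma aff_pencil1 x : G 1 x = - G 0 x.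
Proof. by rewrite !aff_pencil; ring. Qed.

(* The determinant of the normals of pencil a and pencil b, factorised. *)
Definition pencil_det (a b : R) := (b - a) * ((1 - a) * (1 - b) + a * b).

Lemma pencil_det_aff a b c x :
  pencil_det a c * G b x = pencil_det b c * G a x + pencil_det a b * G c x.
Proof. by rewrite !aff_pencil /pencil_det; ring. Qed.

Lemma pencil_det_ge0 a b : 0 <= a -> a <= b -> b <= 1 -> 0 <= pencil_det a b.
Proof.
move=> a0 ab b1; rewrite /pencil_det mulr_ge0 //; first lra.
by rewrite addr_ge0 // mulr_ge0 //; lra.
Qed.

Lemma pencil_det_gt0 a b :
  0 <= a -> a < b -> b <= 1 -> (a, b) <> (0, 1) -> 0 < pencil_det a b.
Proof.
move=> a0 ab b1 ab01; rewrite /pencil_det mulr_gt0 ?subr_gt0 //.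
have [a_gt0|] := ltP 0 a; first by nra.
have [b_lt1|] := ltP b 1; first by nra.
by move=> b1' a0'; exfalso; apply: ab01; congr pair; lra.
Qed.

Lemma line_set_pencil_neq a b :
  0 <= a -> a < b -> b <= 1 -> (a, b) <> (0, 1) ->
  line_set (pencil a) <> line_set (pencil b).
Proof.
move=> a0 ab b1 ab01 eq_ab.
(* p lies on pencil a, and pencil b takes the value pencil_det a b at p. *)
pose p := (q.1 - a * (1 - a), q.2 + (1 - 2 * a)).
have : line_set (pencil a) p by rewrite /line_set /= aff_pencil /p /=; ring.
rewrite eq_ab /line_set /= aff_pencil /p /=.
have := pencil_det_gt0 a0 ab b1 ab01; rewrite /pencil_det; nra.
Qed.

Lemma wedge_pencilI a b : 0 <= a -> a <= b -> b <= 1 ->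
  W 0 a `&` W a b `<=` line_set (pencil 0).
Proof.
move=> a0 ab b1 x []; rewrite /wedge /line_set /= => W0a Wab.
have s0b : (0 <= G 0 x) = (0 <= G b x).
  by move: W0a Wab; case: (0 <= G 0 x); case: (0 <= G a x); case: (0 <= G b x).
move: b1; rewrite le_eqVlt => /predU1P[b1|b_lt1].
  move: s0b; rewrite b1 aff_pencil1 oppr_ge0.
  case: (leP 0 (G 0 x)) => [g0 /esym g0'|g0]; last by rewrite (ltW g0).
  by apply/eqP; rewrite eq_le g0 g0'.
(* For b < 1 the intersection is empty: pencil_det 0 b and pencil_det a b
   are positive, so pencil_det_aff rules out both possible sign patterns. *)
exfalso.
have a_lt_b : a < b by rewrite lt_neqAle ab andbT; apply: contraNneq Wab => ->.
have b0 : 0 < b by lra.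
have b_ne1 (c : R) : (c, b) <> (0, 1) by case=> _ b1; move: b_lt1; rewrite b1 ltxx.
have d0b := pencil_det_gt0 (lexx 0) b0 (ltW b_lt1) (b_ne1 0).
have dab := pencil_det_gt0 a0 a_lt_b (ltW b_lt1) (b_ne1 a).
have d0a := pencil_det_ge0 (lexx 0) a0 (ltW (le_lt_trans ab b_lt1)).
have := pencil_det_aff 0 a b x.
move: W0a s0b; case: (leP 0 (G 0 x)) => g0; case: (leP 0 (G a x)) => ga;
  by case: (leP 0 (G b x)) => gb //= _ _; nra.
Qed.

Lemma setC_wedge_pencil01 : ~` W 0 1 `<=` line_set (pencil 0).
Proof.
move=> x; rewrite /wedge /line_set /= aff_pencil1 oppr_ge0 => /negP; rewrite negbK.
case: (leP 0 (G 0 x)) => [g0 /eqP/esym g0'|g0]; last by rewrite (ltW g0).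
by apply/eqP; rewrite eq_le g0 g0'.
Qed.

Lemma wedge_pencil_dist a b x : a \in `[0, 1] -> b \in `[0, 1] -> W a b x ->
  `|G a x| <= `|b - a| * (2 * `|x.1 - q.1| + `|x.2 - q.2|).
Proof.
rewrite !in_itv /= => /andP[a0 a1] /andP[b0 b1]; rewrite /wedge /= => Wab.
have Ga_le : `|G a x| <= `|G b x - G a x|.
  move: Wab; case: (leP 0 (G a x)) => ga; case: (leP 0 (G b x)) => gb //= _.
    by rewrite (ger0_norm ga) ltr0_norm; lra.
  by rewrite (ltr0_norm ga) ger0_norm; lra.
apply: (le_trans Ga_le).
have -> : G b x - G a x = (b - a) * (- 2 * (x.1 - q.1) + (1 - a - b) * (x.2 - q.2)).
  by rewrite !aff_pencil; ring.
rewrite normrM ler_wpM2l // (le_trans (ler_normD _ _)) // !normrM lerD //.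
  by rewrite normrN normr_nat.
by apply: ler_piMl => //; rewrite ler_norml; lra.
Qed.
End pencil.

Arguments pencil_nondeg {R q} t.

Section mass_distribution.
Variables (R : realType) (mu : {measure set (R * R) -> \bar R}).
Hypothesis mu_mass : mass_distribution mu.

Lemma mu_sub_line_set (l : R * R * R) A :
  nondeg l -> A `<=` line_set l -> measurable A -> mu A = 0%E.
Proof. by case: mu_mass => _ _ _ mu_low l_nondeg Al; apply: mu_low; left; exists l. Qed.

Lemma mu_lty A : measurable A -> (mu A < +oo)%E.
Proof.
case: mu_mass => _ _ muT_lty _ mA.
by apply: le_lt_trans muT_lty; apply: le_measure; rewrite ?inE.
Qed.

Lemma mu_fin_num A : measurable A -> mu A \is a fin_num.
Proof. by move=> mA; rewrite ge0_fin_numE ?mu_lty. Qed.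

Lemma fine_mu_setT_gt0 : 0 < fine (mu setT).
Proof.
case: mu_mass => _ muT_gt0 _ _.
by rewrite -lte_fin fineK ?mu_fin_num.
Qed.

Lemma mu_lt_shrinking_to_line (B : (set (R * R))^nat) (l : R * R * R) eps :
  nondeg l -> (forall n, measurable (B n)) -> nonincreasing_seq B ->
  \bigcap_n B n `<=` line_set l -> 0 < eps -> exists N, (mu (B N) < eps%:E)%E.
Proof.
move=> l_nondeg mB B_decr B_cap eps0.
have mcapB := bigcapT_measurable mB.
have := nonincreasing_cvg_mu (mu_lty (mB 0%N)) mB mcapB B_decr.
rewrite (mu_sub_line_set l_nondeg B_cap mcapB) => cvg_muB.
apply: contrapT => /forallNP muB_ge.
suff : (eps%:E <= 0)%E by rewrite lee_fin leNgt eps0.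
apply: (cvge_to_ge cvg_muB); apply: nearW => n /=.
by rewrite leNgt; apply/negP; exact: muB_ge.
Qed.

End mass_distribution.

Section pencil_measure.
Variables (R : realType) (q : R * R) (mu : {measure set (R * R) -> \bar R}).
Hypothesis mu_mass : mass_distribution mu.

Local Notation G t := (aff (pencil q t)).
Local Notation W a b := (wedge (pencil q a) (pencil q b)).

Lemma mu_wedge_pencilD a b : 0 <= a -> a <= b -> b <= 1 ->
  mu (W 0 b) = (mu (W 0 a) + mu (W a b))%E.
Proof.
move=> a0 ab b1.
have mW c d : measurable (W c d) by exact: measurable_wedge.
have mu_I0 : mu (W 0 a `&` W a b) = 0%E.
  apply: (mu_sub_line_set mu_mass (pencil_nondeg 0) (wedge_pencilI a0 ab b1)).
  exact: measurableI.
rewrite -(measureU0 _ _ mu_I0) //; last exact: measurableI.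
by rewrite wedgeUI measureUfinl ?mu_I0 ?sube0 // mu_lty.
Qed.

Lemma mu_wedge_pencil01 : mu (W 0 1) = mu setT.
Proof.
have mW := measurable_wedge (pencil q 0) (pencil q 1).
rewrite -(setUv (W 0 1)) measureU0 //; first exact: measurableC.
exact: (mu_sub_line_set mu_mass (pencil_nondeg 0) (@setC_wedge_pencil01 _ q)
  (measurableC mW)).
Qed.

Lemma mu_wedgeC l1 l2 : mu (~` wedge l1 l2) = (mu setT - mu (wedge l1 l2))%E.
Proof.
by rewrite -setTD measureD ?setTI ?(mu_lty mu_mass) //; exact: measurable_wedge.
Qed.

Lemma mu_wedge_pencil_near x eps : x \in `[0, 1] -> 0 < eps ->
  exists2 d, 0 < d & forall y, y \in `[0, 1] -> `|y - x| < d ->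
    (mu (W x y) < eps%:E)%E.
Proof.
move=> x01 eps0.
pose C z := 2 * `|z.1 - q.1| + `|z.2 - q.2|.
have C_ge0 z : 0 <= C z by rewrite addr_ge0 ?mulr_ge0.
(* By wedge_pencil_dist, W x y is contained in B n once |y - x| < 1/(n+1). *)
pose B n := [set z | `|G x z| <= n.+1%:R^-1 * C z].
have mB n : measurable (B n).
  have mG : measurable_fun setT (fun z => `|G x z|).
    exact: measurableT_comp (measurable_aff _).
  have mC : measurable_fun setT (fun z => n.+1%:R^-1 * C z).
    apply: measurable_funM => //; apply: measurable_funD.
      apply: measurable_funM => //; apply: measurableT_comp => //.
      by apply: measurable_funB => //; exact: measurable_fst.
    apply: measurableT_comp => //.
    by apply: measurable_funB => //; exact: measurable_snd.
  by have := measurable_fun_ler mG mC measurableT (Y := [set true]) I; rewrite setTI.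
have B_decr : nonincreasing_seq B.
  move=> m n mn; apply/subsetPset => z; rewrite /B /= => /le_trans; apply.
  by rewrite ler_wpM2r // lef_pV2 ?posrE ?ler_nat.
have B_cap : \bigcap_n B n `<=` line_set (pencil q x).
  move=> z Bz; apply: contrapT => /eqP Gz.
  have Gz_gt0 : 0 < `|G x z| by rewrite normr_gt0.
  have /archi_boundP := divr_ge0 (C_ge0 z) (ltW Gz_gt0).
  set n := Num.bound _ => Cn.
  have := Bz n I; rewrite /B /= -ler_pdivrMl ?invr_gt0 ?ltr0n // invrK.
  rewrite -ler_pdivlMr // => /le_lt_trans/(_ Cn).
  by rewrite ltr_nat ltnNge leqnSn.
have [N muBN] := mu_lt_shrinking_to_line mu_mass (pencil_nondeg x) mB B_decr B_cap eps0.
exists N.+1%:R^-1 => [|y y01 yx]; first by rewrite invr_gt0.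
apply: le_lt_trans muBN; apply: le_measure; rewrite ?inE; [exact: measurable_wedge | exact: mB |].
move=> z /(wedge_pencil_dist x01 y01) Gz; apply: le_trans Gz _.
by rewrite ler_wpM2r // ltW.
Qed.

Definition pencil_mass (t : R) : R := fine (mu (W 0 t)) / fine (mu setT).

Lemma pencil_massB a b : 0 <= a -> a <= b -> b <= 1 ->
  pencil_mass b - pencil_mass a = fine (mu (W a b)) / fine (mu setT).
Proof.
move=> a0 ab b1; rewrite /pencil_mass -mulrBl (mu_wedge_pencilD a0 ab b1).
by rewrite fineD ?(mu_fin_num mu_mass (measurable_wedge _ _)) // addrAC subrr add0r.
Qed.

Lemma pencil_mass_homo : {in `[0, 1] &, {homo pencil_mass : x y / x <= y}}.
Proof.
move=> x y; rewrite !in_itv /= => /andP[x0 x1] /andP[y0 y1] xy.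
by rewrite -subr_ge0 pencil_massB // divr_ge0 // ?fine_ge0 ?measure_ge0 //.
Qed.

Lemma pencil_mass_cont : {within `[0, 1], continuous pencil_mass}.
Proof.
apply: within_continuous_dist => x e x01 e0.
have T0 := fine_mu_setT_gt0 mu_mass.
have [d d0 near_x] := mu_wedge_pencil_near x01 (mulr_gt0 e0 T0).
exists d => // y y01 xy.
have lt_e a b : a \in `[0, 1] -> b \in `[0, 1] -> a <= b ->
    (mu (W a b) < (e * fine (mu setT))%:E)%E -> `|pencil_mass a - pencil_mass b| < e.
  move=> a01 b01 ab; move: (a01) (b01); rewrite !in_itv /= => /andP[a0 _] /andP[_ b1].
  rewrite distrC ger0_norm ?subr_ge0 ?pencil_mass_homo // pencil_massB //.
  by rewrite ltr_pdivrMr // -lte_fin fineK ?(mu_fin_num mu_mass (measurable_wedge _ _)).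
have := near_x y y01; rewrite distrC => /(_ xy).
have [xy'|/ltW yx'] := leP x y; first exact: lt_e.
by rewrite wedgeC distrC; exact: lt_e.
Qed.

Lemma pencil_mass0 : pencil_mass 0 = 0.
Proof. by rewrite /pencil_mass wedgexx measure0 mul0r. Qed.

Lemma pencil_mass1 : pencil_mass 1 = 1.
Proof.
by rewrite /pencil_mass mu_wedge_pencil01 divff // gt_eqF // fine_mu_setT_gt0.
Qed.

Lemma bisects2_pencil a b : 0 <= a -> a <= b -> b <= 1 ->
  pencil_mass b - pencil_mass a = 2^-1 -> bisects2 mu (pencil q a) (pencil q b).
Proof.
move=> a0 ab b1 half.
have a_lt_b : a < b.
  by rewrite lt_neqAle ab andbT; apply/eqP => ab_eq; move: half; rewrite ab_eq subrr; lra.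
have ab01 : (a, b) <> (0, 1).
  by case=> a_eq b_eq; move: half; rewrite a_eq b_eq pencil_mass0 pencil_mass1; lra.
have lines_ab := line_set_pencil_neq a0 a_lt_b b1 ab01.
have T0 := fine_mu_setT_gt0 mu_mass.
have Wab_half : fine (mu (W a b)) = fine (mu setT) / 2.
  move: half; rewrite pencil_massB // => /(congr1 ( *%R^~ (fine (mu setT)))).
  by rewrite divfK ?gt_eqF // => ->; rewrite mulrC.
rewrite /bisects2 Rplus2_wedge // Rminus2_wedge // mu_wedgeC.
rewrite -[mu setT]fineK ?(mu_fin_num mu_mass) //.
rewrite -[mu (W a b)]fineK ?(mu_fin_num mu_mass (measurable_wedge _ _)) // Wab_half.
by rewrite -EFinB; congr (_%:E); field.
Qed.

End pencil_measure.

Theorem theorem5 (R : realType) (mu1 mu2 : {measure set (R * R) -> \bar R})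
  (q : R * R) :
  mass_distribution mu1 -> mass_distribution mu2 ->
  exists l1 l2 : R * R * R,
    [/\ nondeg l1, nondeg l2, aff l1 q = 0 & aff l2 q = 0] /\
    (bisects2 mu1 l1 l2 /\ bisects2 mu2 l1 l2).
Proof.
move=> mu1_mass mu2_mass.
have [a [b [a0 ab b1 half1 half2]]] := halving_interval
  (pencil_mass_homo q mu1_mass) (pencil_mass_homo q mu2_mass)
  (pencil_mass_cont mu1_mass) (pencil_mass_cont mu2_mass)
  (pencil_mass0 q mu1) (pencil_mass0 q mu2)
  (pencil_mass1 q mu1_mass) (pencil_mass1 q mu2_mass).
exists (pencil q a), (pencil q b); split.
  by split; [exact: pencil_nondeg | exact: pencil_nondeg | exact: aff_pencil_center..].
by split; exact: bisects2_pencil.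
Qed.
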